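(* Let $G$ be a non-cyclic finite group of order $n$. Then $$\psi(G)\leq \frac{7}{11}\,\psi(C_n).$$
   Context: For a finite group $G$, $\psi(G)=\sum_{g\in G} o(g)$ denotes the sum of the orders of all elements of $G$. $C_n$ denotes the cyclic group of order $n$. *)

From mathcomp Require Import all_boot all_fingroup all_algebra all_solvable.
Set Implicit Arguments. Unset Strict Implicit. Unset Printing Implicit Defensive.
Local Open Scope group_scope.

Definition psi (gT : finGroupType) (G : {set gT}) : nat := (\sum_(x in G) #[x])%N.

(* psi(C_n): C_n realised as the cyclic group Zp n (of order n for n >= 1)
   inside the additive group of 'Z_n. *)
Definition psi_cyclic (n : nat) : nat := psi (Zp n).

From mathcomp Require Import all_boot all_fingroup all_algebra all_solvable.
From mathcomp Require Import zify.
Set Implicit Arguments. Unset Strict Implicit. Unset Printing Implicit Defensive.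

(* psi(C_n) = sum_(i < n) n / gcd(n, i) is multiplicative in n and satisfies
   (p + 1) psi(C_(p^k)) = p^(2k+1) + 1, whence 2 n^2 <= (q + 1) psi(C_n) when q is the
   largest prime divisor of n.  Induct on |G|, with q the largest prime divisor of |G|.
   If G has a normal cyclic Sylow q-subgroup Q, then o(x) = o(x_q) o(xQ), and in each coset
   the number of x with x_q = y decreases as o(y) grows, so Chebyshev's sum inequality gives
   psi(G) <= psi(Q) psi(G/Q); this settles the case of a non-cyclic G/Q by induction.  If
   G/Q is cyclic, C_G(Q)/Q is a proper subgroup since G is not cyclic, and no coset outside
   it contains an x such that x_q generates Q, which gains the missing factor.
   Otherwise no element has order > |G|/q, as it would produce a normal cyclic Sylow
   q-subgroup.  If no element has order |G|/q either, then (q + 1) psi(G) <= |G|^2, which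
   suffices; otherwise q psi(G) <= |G|^2 suffices for q >= 5, and for q = 2, 3 one counts
   the elements outside the cyclic subgroup of index q separately. *)

Local Open Scope group_scope.
Local Open Scope nat_scope.

(* The element i of Z_n has order n / gcd(n, i). *)
Definition psiC (n : nat) : nat := \sum_(i < n) n %/ gcdn n i.

Section CyclicGroups.
Variable gT : finGroupType.

Lemma groupX_constt (G : {group gT}) x pi : x \in G -> x.`_pi \in G.
Proof. exact: groupX. Qed.

Lemma psi_cycle (x : gT) : psi <[x]> = psiC #[x].
Proof.
have -> : <[x]> = [set x ^+ val i | i : 'I_#[x]].
  apply/setP=> y; apply/idP/imsetP => [/cyclePmin[i lt_i ->]|[i _ ->]].
    by exists (Ordinal lt_i).
  exact: mem_cycle.
rewrite /psi big_imset /=; first by apply: eq_bigr => i _; rewrite orderXgcd.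
move=> i j _ _ /eqP; rewrite eq_expg_mod_order !modn_small //.
by move/eqP/val_inj.
Qed.

Lemma cyclic_psiE (G : {group gT}) : cyclic G -> psi G = psiC #|G|.
Proof. by case/cyclicP=> x ->; rewrite psi_cycle. Qed.

Lemma order_notin_cycleX (u y : gT) p k : prime p -> #[u] = p ^ k.+1 ->
  y \in <[u]> :\: <[u ^+ p]> -> #[y] = #[u].
Proof.
move=> p_pr ou; rewrite inE => /andP[yX /cycleP[i def_y]]; rewrite {}def_y in yX *.
have p'i : ~~ (p %| i).
  by apply: contra yX => /dvdnP[j ->]; rewrite mulnC expgM mem_cycle.
have co_ui : coprime #[u] i by rewrite ou coprime_pexpl // prime_coprime.
by rewrite orderXgcd (eqP co_ui) divn1.
Qed.

Lemma psi_cycle_expS (u : gT) p k : prime p -> #[u] = p ^ k.+1 ->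
  psi <[u]> = psi <[u ^+ p]> + (p ^ k.+1 - p ^ k) * p ^ k.+1.
Proof.
move=> p_pr ou; have sXu : <[u ^+ p]> \subset <[u]> := cycleX u p.
have ouX : #[u ^+ p] = p ^ k.
  by rewrite orderXdiv ou ?expnS ?mulKn ?dvdn_mulr ?prime_gt0.
rewrite /psi (big_setID <[u ^+ p]>) /= (setIidPr sXu); congr (_ + _).
rewrite (eq_bigr _ (fun y => order_notin_cycleX p_pr ou)) sum_nat_const.
by rewrite cardsD (setIidPr sXu) -!orderE ou ouX.
Qed.

End CyclicGroups.

Lemma cyclic_Zp n : cyclic (Zp n).
Proof. by rewrite /Zp; case: ifP => _; rewrite ?cyclic1 ?Zp_cycle ?cycle_cyclic. Qed.

Lemma psi_cyclicE n : 0 < n -> psi_cyclic n = psiC n.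
Proof. by move=> n_gt0; rewrite /psi_cyclic cyclic_psiE ?cyclic_Zp ?card_Zp. Qed.

Lemma psiC1 : psiC 1 = 1.
Proof. by rewrite /psiC big_ord1. Qed.

Lemma psiC_le n : psiC n <= n * n.
Proof.
rewrite /psiC -[X in _ <= X * _]card_ord -sum_nat_const.
by apply: leq_sum => i _; apply: leq_div.
Qed.

Lemma coprime_gcdnM a b i : coprime a b -> gcdn (a * b) i = gcdn a i * gcdn b i.
Proof.
move=> co_ab; apply/eqP; rewrite eqn_dvd; apply/andP; split.
  rewrite muln_gcdl !muln_gcdr !dvdn_gcd dvdn_gcdl (dvdn_mull _ (dvdn_gcdr _ _)).
  by rewrite !(dvdn_mulr _ (dvdn_gcdr _ _)).
have co_g : coprime (gcdn a i) (gcdn b i).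
  exact: coprime_dvdl (dvdn_gcdl a i) (coprime_dvdr (dvdn_gcdl b i) co_ab).
by rewrite dvdn_gcd dvdn_mul ?dvdn_gcdl //= Gauss_dvd // !dvdn_gcdr.
Qed.

Lemma coprime_divn_gcdM a b i : 0 < a -> 0 < b -> coprime a b ->
  (a * b) %/ gcdn (a * b) i = (a %/ gcdn a i) * (b %/ gcdn b i).
Proof.
move=> a_gt0 b_gt0 co_ab; rewrite coprime_gcdnM //.
have ga_gt0 : 0 < gcdn a i by rewrite gcdn_gt0 a_gt0.
have gb_gt0 : 0 < gcdn b i by rewrite gcdn_gt0 b_gt0.
rewrite -{1}(divnK (dvdn_gcdl a i)) -{1}(divnK (dvdn_gcdl b i)).
by rewrite mulnACA mulnK // muln_gt0 ga_gt0 gb_gt0.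
Qed.

Lemma psiCM a b : 0 < a -> 0 < b -> coprime a b -> psiC (a * b) = psiC a * psiC b.
Proof.
move=> a_gt0 b_gt0 co_ab.
pose crt (j : 'I_(a * b)) : 'I_a * 'I_b :=
  (Ordinal (ltn_pmod j a_gt0), Ordinal (ltn_pmod j b_gt0)).
have crt_inj : injective crt.
  move=> j k [/eqP eq_a /eqP eq_b]; apply: val_inj => /=.
  have : j == k %[mod a * b] by rewrite chinese_remainder // eq_a eq_b.
  by rewrite !modn_small // => /eqP.
have crt_bij : bijective crt.
  by apply: inj_card_bij => //; rewrite card_prod !card_ord.
rewrite /psiC big_distrlr /= pair_bigA /= (reindex crt) /=; last exact: onW_bij.
apply: eq_bigr => j _.
by rewrite coprime_divn_gcdM // -(gcdn_modr a j) -(gcdn_modr b j).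
Qed.

Lemma psiC_partnC p n : 0 < n -> psiC n = psiC n`_p * psiC n`_p^'.
Proof.
by move=> n_gt0; rewrite -{1}(partnC p n_gt0) psiCM ?part_gt0 ?coprime_partC.
Qed.

Lemma psiC_expS p k : prime p ->
  psiC (p ^ k.+1) = psiC (p ^ k) + (p * p - p) * (p ^ k * p ^ k).
Proof.
move=> p_pr; have [u defZ] := cyclicP (cyclic_Zp (p ^ k.+1)).
have ou : #[u] = p ^ k.+1 by rewrite orderE -defZ card_Zp ?expn_gt0 ?prime_gt0.
rewrite -ou -psi_cycle (psi_cycle_expS p_pr ou) psi_cycle orderXdiv ou; last first.
  by rewrite expnS dvdn_mulr.
rewrite expnS mulKn ?prime_gt0 //; congr (_ + _).
by rewrite !mulnBl mulnACA [p ^ k * (p * _)]mulnCA.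
Qed.

Lemma psiC_exp p k : prime p -> (p + 1) * psiC (p ^ k) = p * (p ^ k * p ^ k) + 1.
Proof.
move=> p_pr; have p_gt0 := prime_gt0 p_pr.
elim: k => [|k IHk]; first by rewrite psiC1 expn0 !muln1.
rewrite psiC_expS // mulnDr IHk expnS.
have : p <= p * p by rewrite leq_pmull.
set X := p ^ k; nia.
Qed.

Lemma max_pdiv_partC n : 1 < n -> max_pdiv n`_(max_pdiv n)^' < max_pdiv n.
Proof.
move=> n_gt1; set p := max_pdiv n; set m := n`_p^'.
have p_gt1 : 1 < p := prime_gt1 (max_pdiv_prime n_gt1).
have [m_le1 | m_gt1] := leqP m 1.
  by apply: leq_ltn_trans p_gt1; case: (m) m_le1 => [|[]].
have r_pr := max_pdiv_prime m_gt1.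
have r_n : max_pdiv m %| n.
  exact: dvdn_trans (max_pdiv_dvd m) (dvdn_part _ _).
rewrite ltn_neqAle max_pdiv_max ?mem_primes ?r_pr ?r_n ?(ltnW n_gt1) // andbT.
have : max_pdiv m \in p^' by apply: pnatPpi (part_pnat _ n) _; rewrite pi_max_pdiv.
by rewrite !inE.
Qed.

Lemma psiC_ge_sqr n : 0 < n -> 2 * (n * n) <= (max_pdiv n).+1 * psiC n.
Proof.
elim/ltn_ind: n => n IHn n_gt0; have [n_le1 | n_gt1] := leqP n 1.
  have -> : n = 1 by lia.
  by rewrite psiC1.
set p := max_pdiv n; set m := n`_p^'; set X := p ^ logn p n.
have p_pr : prime p := max_pdiv_prime n_gt1.
have m_gt0 : 0 < m := part_gt0 _ _.
have def_n : n = X * m by rewrite /X -p_part partnC.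
have m_lt_n : m < n.
  rewrite [X in _ < X]def_n ltn_Pmull // -{1}(expn0 p) ltn_exp2l ?prime_gt1 //.
  by rewrite logn_gt0 pi_max_pdiv.
have IHm : 2 * (m * m) <= p * psiC m.
  apply: leq_trans (IHn m m_lt_n m_gt0) _.
  by rewrite leq_mul2r max_pdiv_partC ?orbT.
rewrite (psiC_partnC p n_gt0) -/m p_part -/X -/p def_n.
set Y := psiC X; set Z := psiC m.
have def_Y : (p + 1) * Y = p * (X * X) + 1 := psiC_exp _ p_pr.
rewrite -[p.+1]addn1 [_ * (Y * Z)]mulnA def_Y.
have : X * X * (2 * (m * m)) <= X * X * (p * Z) by rewrite leq_mul2l IHm orbT.
nia.
Qed.

Lemma psiC_expS_ge p k : prime p -> (p * p - p + 1) * psiC (p ^ k) <= psiC (p ^ k.+1).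
Proof.
move=> p_pr; rewrite psiC_expS // mulnDl mul1n addnC leq_add2l.
by rewrite leq_mul2l psiC_le orbT.
Qed.

Lemma psiC_divn_prime p n : prime p -> 0 < n -> p %| n ->
  (p * p - p + 1) * psiC (n %/ p) <= psiC n.
Proof.
move=> p_pr n_gt0 p_n; have p_gt0 := prime_gt0 p_pr.
have : 0 < logn p n by rewrite logn_gt0 mem_primes p_pr n_gt0 p_n.
case def_k: (logn p n) => [|k] // _; set m := n`_p^'.
have m_gt0 : 0 < m := part_gt0 _ _.
have def_n : n = p ^ k.+1 * m by rewrite -def_k -p_part partnC.
have co_pm j : coprime (p ^ j) m.
  exact: coprimeXl (pnat_coprime (pnat_id p_pr) (part_pnat _ _)).
rewrite def_n expnS -mulnA mulKn // mulnA -expnS !psiCM ?expn_gt0 ?p_gt0 //.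
by rewrite mulnA leq_mul2r psiC_expS_ge ?orbT.
Qed.

Lemma psiC_dvdn_proper d n : 0 < n -> d %| n -> d < n -> 3 * psiC d <= psiC n.
Proof.
elim/ltn_ind: n => n IHn n_gt0 d_n d_lt_n.
have d_gt0 : 0 < d := dvdn_gt0 n_gt0 d_n.
have nd_gt1 : 1 < n %/ d by rewrite ltn_divRL // mul1n.
set p := pdiv (n %/ d); have p_pr : prime p := pdiv_prime nd_gt1.
have p_nd : p %| n %/ d := pdiv_dvd _.
have p_n : p %| n := dvdn_trans p_nd (dvdn_div d_n).
have np_gt0 : 0 < n %/ p by rewrite divn_gt0 ?prime_gt0 // dvdn_leq.
have psi_np : 3 * psiC (n %/ p) <= psiC n.
  apply: leq_trans (psiC_divn_prime p_pr n_gt0 p_n); rewrite leq_mul2r.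
  apply/orP; right; rewrite addn1 ltnS -[X in _ * _ - X]muln1 -mulnBr.
  by rewrite -[2]/(2 * 1) leq_mul ?subn_gt0 ?prime_gt1.
have d_np : d %| n %/ p.
  rewrite -(divnK d_n) -(divnK p_nd) mulnAC mulnK ?prime_gt0 //.
  by rewrite dvdn_mull.
have [-> // | ne_d] := eqVneq d (n %/ p).
have d_lt_np : d < n %/ p by rewrite ltn_neqAle ne_d dvdn_leq.
have np_lt_n : n %/ p < n by rewrite ltn_Pdiv ?prime_gt1.
apply: leq_trans (IHn _ np_lt_n np_gt0 d_np d_lt_np) (leq_trans _ psi_np).
exact: leq_pmull.
Qed.

Lemma psiC_expS_ge_odd q k : prime q -> 2 < q ->
  7 * q * psiC (q ^ k) <= 3 * psiC (q ^ k.+1).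
Proof.
move=> q_pr q_gt2; rewrite psiC_expS //.
have := psiC_le (q ^ k); set X := q ^ k; set Y := psiC X => le_YX.
have : (7 * q - 3) * Y <= (7 * q - 3) * (X * X) by rewrite leq_mul2l le_YX orbT.
have : (7 * q - 3) * (X * X) <= 3 * (q * q - q) * (X * X).
  by rewrite leq_mul2r; apply/orP; right; nia.
nia.
Qed.

Lemma chebyshev_sum (T : finType) (A : {pred T}) (a b : T -> nat) :
  {in A &, forall i j, (a i <= a j) && (b j <= b i) || (a j <= a i) && (b i <= b j)} ->
  #|A| * (\sum_(i in A) a i * b i) <= (\sum_(i in A) a i) * (\sum_(i in A) b i).
Proof.
move=> ab_opp; set S := \sum_(i in A) a i * b i.
have double_lhs : 2 * (#|A| * S) =
    \sum_(i in A) \sum_(j in A) (a i * b i + a j * b j).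
  rewrite (eq_bigr (fun i => #|A| * (a i * b i) + S)); last first.
    by move=> i _; rewrite big_split /= sum_nat_const.
  by rewrite big_split /= sum_nat_const -big_distrr /= -/S; lia.
have double_rhs : 2 * ((\sum_(i in A) a i) * (\sum_(i in A) b i)) =
    \sum_(i in A) \sum_(j in A) (a i * b j + a j * b i).
  rewrite [RHS](eq_bigr (fun i => a i * (\sum_(j in A) b j) + (\sum_(j in A) a j) * b i)).
    by rewrite big_split /= -big_distrl -big_distrr /=; lia.
  by move=> i _; rewrite big_split /= -big_distrr -big_distrl.
rewrite -(leq_pmul2l (isT : 0 < 2)) double_lhs double_rhs.
apply: leq_sum => i iA; apply: leq_sum => j jA.
by case/orP: (ab_opp i j iA jA) => /andP[? ?]; nia.
Qed.

Section NormalCyclicSylow.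
Variables (gT : finGroupType) (G Q : {group gT}) (q : nat).
Hypotheses (q_pr : prime q) (sylQ : q.-Sylow(G) Q) (nsQG : Q <| G) (cycQ : cyclic Q).

Let sQG : Q \subset G := normal_sub nsQG.
Let nQG : G \subset 'N(Q) := normal_norm nsQG.
Let qQ : q.-group Q := pHall_pgroup sylQ.

Lemma constt_Sylow x : x \in G -> x.`_q \in Q.
Proof. by move=> Gx; rewrite (mem_normal_Hall sylQ) ?p_elt_constt ?groupX_constt. Qed.

Lemma coset_constt' x : x \in G -> coset Q x = coset Q x.`_q^'.
Proof.
move=> Gx; rewrite -{1}(consttC q x) morphM ?(subsetP nQG) ?groupX_constt //=.
by rewrite coset_id ?constt_Sylow ?mul1g.
Qed.

Lemma order_coset_p'elt w : w \in G -> q^'.-elt w -> #[coset Q w] = #[w].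
Proof.
move=> Gw q'w; have Nw : w \in 'N(Q) := subsetP nQG w Gw.
apply/eqP; rewrite eqn_dvd morph_order //= order_dvdn; apply/eqP.
set k := #[coset Q w].
have Qwk : w ^+ k \in Q.
  by apply: coset_idr; rewrite ?groupX // morphX // expg_order.
rewrite -(constt_p_elt (mem_p_elt qQ Qwk)).
by apply/constt1P; apply: p_eltX.
Qed.

Lemma order_constt_coset x : x \in G -> #[x] = #[x.`_q] * #[coset Q x].
Proof.
move=> Gx; rewrite coset_constt' // order_coset_p'elt ?groupX_constt ?p_elt_constt //.
by rewrite !order_constt partnC.
Qed.

Definition qpart_count (c : coset_of Q) (y : gT) :=
  #|[set x in G | (coset Q x == c) && (x.`_q == y)]|.

Definition qpart_sum (c : coset_of Q) := \sum_(x in G | coset Q x == c) #[x.`_q].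

Lemma psi_quotient_decomp : psi G = \sum_(c in G / Q) #[c] * qpart_sum c.
Proof.
rewrite /psi (eq_bigr _ (@order_constt_coset)).
rewrite (partition_big_imset (coset Q)) /= quotientE morphimEsub //.
apply: eq_bigr => c _; rewrite /qpart_sum big_distrr /=.
by apply: eq_bigr => x /andP[_ /eqP <-]; rewrite mulnC.
Qed.

Lemma qpart_sumE c : qpart_sum c = \sum_(y in Q) #[y] * qpart_count c y.
Proof.
rewrite /qpart_sum (partition_big (fun x => x.`_q) (mem Q)) /=; last first.
  by move=> x /andP[Gx _]; apply: constt_Sylow.
apply: eq_bigr => y Qy; rewrite (eq_bigr (fun _ => #[y])); last first.
  by move=> x /andP[_ /eqP ->].
rewrite sum_nat_const mulnC /qpart_count; congr (_ * _).
by apply: eq_card => x; rewrite !inE andbA.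
Qed.

Lemma sum_qpart_count c : c \in G / Q -> \sum_(y in Q) qpart_count c y = #|Q|.
Proof.
rewrite quotientE morphimEsub // => /imsetP[x0 Gx0 ->].
have <- : #|[set x in G | coset Q x == coset Q x0]| = #|Q|.
  rewrite -(card_rcoset Q x0); apply: eq_card => x; rewrite !inE.
  apply/andP/idP => [[Gx /eqP Qx_x0] | x0Qx].
    by apply/rcoset_kercosetP; rewrite ?(subsetP nQG).
  have Gx : x \in G.
    by case/rcosetP: x0Qx => y Qy ->; rewrite groupM // (subsetP sQG).
  by split=> //; apply/eqP/rcoset_kercosetP; rewrite ?(subsetP nQG).
apply/esym; rewrite -sum1_card (partition_big (fun x => x.`_q) (mem Q)) /=.
  apply: eq_bigr => y Qy; rewrite sum1_card.
  by apply: eq_card => x; rewrite unfold_in /= !inE andbA.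
by move=> x; rewrite inE => /andP[Gx _]; apply: constt_Sylow.
Qed.

(* x |-> y' * x_q' maps the x of the coset c with x_q = y injectively to those
   with x_q = y'. *)
Lemma qpart_count_cycle c y y' : y \in Q -> y' \in <[y]> ->
  qpart_count c y <= qpart_count c y'.
Proof.
move=> Qy y_y'; have Qy' : y' \in Q by apply: subsetP y_y'; rewrite cycle_subG.
pose f x := (y' * x.`_q^')%g.
have f_inj : {in [set x in G | (coset Q x == c) && (x.`_q == y)] &, injective f}.
  move=> x1 x2; rewrite !inE => /and3P[_ _ /eqP x1q] /and3P[_ _ /eqP x2q] /mulgI eq_q'.
  by rewrite -(consttC q x1) -(consttC q x2) x1q x2q eq_q'.
rewrite /qpart_count -(card_in_imset f_inj); apply: subset_leq_card.
apply/subsetP=> _ /imsetP[x /[!inE] /and3P[Gx /eqP xc /eqP xq] ->].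
have Gy' : y' \in G := subsetP sQG y' Qy'.
have y'x_comm : commute y' x.`_q^'.
  have : y' \in <[x]> by apply: subsetP y_y'; rewrite cycle_subG -xq cycle_constt.
  by case/cycleP=> i ->; apply: commuteX2.
rewrite groupM ?groupX_constt //= morphM ?(subsetP nQG) ?groupX_constt //=.
rewrite coset_id // mul1g -coset_constt' // xc eqxx /=.
rewrite consttM // constt_p_elt ?(mem_p_elt qQ) //.
by rewrite (constt1P (p_elt_constt _ _)) mulg1.
Qed.

Lemma cycle_total y y' : y \in Q -> y' \in Q -> (y \in <[y']>) || (y' \in <[y]>).
Proof.
move=> Qy Qy'; rewrite -[y \in _]cycle_subG -[y' \in _]cycle_subG.
have sYQ : <[y]> \subset Q by rewrite cycle_subG.
have sY'Q : <[y']> \subset Q by rewrite cycle_subG.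
rewrite -(cardSg_cyclic cycQ sYQ sY'Q) -(cardSg_cyclic cycQ sY'Q sYQ) -!orderE.
have [i ->] := p_natP (mem_p_elt qQ Qy).
have [j ->] := p_natP (mem_p_elt qQ Qy').
have [le_ij | /ltnW le_ji] := leqP i j; first by rewrite dvdn_exp2l.
by rewrite (dvdn_exp2l _ le_ji) orbT.
Qed.

(* Chebyshev's sum inequality: the counts decrease as the orders increase. *)
Lemma qpart_sum_le (A : {group gT}) c : A \subset Q -> c \in G / Q ->
    {in Q :\: A, forall y, qpart_count c y = 0} ->
  #|A| * qpart_sum c <= psi A * #|Q|.
Proof.
move=> sAQ Gc count0.
have sum_outside0 F : \sum_(y in Q :\: A) F y * qpart_count c y = 0.
  by rewrite big1 // => y /count0 ->; rewrite muln0.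
have sum_A : \sum_(y in A) qpart_count c y = #|Q|.
  rewrite -(sum_qpart_count Gc) [RHS](big_setID A) /= (setIidPr sAQ).
  by rewrite [X in _ + X]big1 ?addn0 // => y /count0.
rewrite -sum_A qpart_sumE (big_setID A) /= (setIidPr sAQ) sum_outside0 addn0.
apply: chebyshev_sum => y y' Ay Ay'.
have [Qy Qy'] := (subsetP sAQ y Ay, subsetP sAQ y' Ay').
case/orP: (cycle_total Qy Qy') => [y_y' | y'_y]; apply/orP; [left | right].
  by rewrite dvdn_leq ?order_gt0 ?order_dvdG ?qpart_count_cycle.
by rewrite dvdn_leq ?order_gt0 ?order_dvdG ?qpart_count_cycle.
Qed.

Lemma qpart_sum_le_psiC c : c \in G / Q -> qpart_sum c <= psiC #|Q|.
Proof.
move=> Gc; rewrite -(leq_pmul2l (cardG_gt0 Q)) -(cyclic_psiE cycQ) [X in _ <= X]mulnC.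
by apply: qpart_sum_le => // y; rewrite setDv inE.
Qed.

(* If x_q generates Q then x centralizes Q, as x_q' commutes with x_q. *)
Lemma qpart_count_generator0 c y : c \notin 'C_G(Q) / Q -> y \in Q -> #[y] = #|Q| ->
  qpart_count c y = 0.
Proof.
move=> Cc Qy oy; apply: contraNeq Cc; rewrite cards_eq0 => /set0Pn[x].
rewrite !inE => /and3P[Gx /eqP <- /eqP xq].
have defQ : <[y]> = Q by apply/eqP; rewrite eqEcard cycle_subG Qy -orderE oy /=.
have Cxq' : x.`_q^' \in 'C(Q).
  rewrite -defQ cent_cycle; apply/cent1P; rewrite -xq.
  by apply: commuteX2.
have Cy : y \in 'C(Q) := subsetP (cyclic_abelian cycQ) y Qy.
by rewrite mem_quotient // inE Gx -(consttC q x) xq groupM.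
Qed.

Lemma qpart_sum_le_noncentral c k : c \in G / Q -> c \notin 'C_G(Q) / Q ->
  #|Q| = q ^ k.+1 -> qpart_sum c <= q * psiC (q ^ k).
Proof.
move=> Gc Cc oQ; have [u defQ] := cyclicP cycQ.
have ou : #[u] = q ^ k.+1 by rewrite orderE -defQ.
set A := <[u ^+ q]>%G.
have oA : #|A| = q ^ k.
  by rewrite -orderE orderXdiv ou expnS ?dvdn_mulr ?mulKn ?prime_gt0.
have sAQ : A \subset Q by rewrite defQ cycleX.
rewrite -(leq_pmul2l (cardG_gt0 A)); apply: leq_trans (qpart_sum_le sAQ Gc _) _.
  move=> y QAy; apply: qpart_count_generator0 => //; first by case/setDP: QAy.
  by rewrite oQ -ou (order_notin_cycleX q_pr ou) // -defQ.
rewrite cyclic_psiE ?cycle_cyclic // oA oQ expnS; apply: eq_leq; lia.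
Qed.

Lemma psi_quotient_le : psi G <= psiC #|Q| * psi (G / Q).
Proof.
rewrite psi_quotient_decomp /psi big_distrr /=; apply: leq_sum => c Gc.
by rewrite mulnC leq_mul2r qpart_sum_le_psiC ?orbT.
Qed.

Lemma psi_le_centralizer k : #|Q| = q ^ k.+1 ->
  psi G <= psiC #|Q| * psi ('C_G(Q) / Q)
           + q * psiC (q ^ k) * \sum_(c in G / Q :\: 'C_G(Q) / Q) #[c].
Proof.
move=> oQ; have sKGQ : 'C_G(Q) / Q \subset G / Q by rewrite quotientS ?subsetIl.
rewrite psi_quotient_decomp (big_setID ('C_G(Q) / Q)) /= (setIidPr sKGQ).
rewrite /psi 2!big_distrr /=; apply: leq_add; apply: leq_sum => c.
  by move=> Kc; rewrite mulnC leq_mul2r qpart_sum_le_psiC ?(subsetP sKGQ) ?orbT.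
case/setDP=> Gc Kc; rewrite mulnC leq_mul2r.
by rewrite (qpart_sum_le_noncentral Gc Kc oQ) orbT.
Qed.

Lemma cyclic_quotient_centralizer :
  cyclic (G / Q) -> 'C_G(Q) / Q = G / Q -> cyclic G.
Proof.
move=> cycGQ defGQ.
have sQC : Q \subset 'C_G(Q) by rewrite subsetI sQG; apply: cyclic_abelian.
have cQG : G \subset 'C(Q).
  by rewrite (subset_trans _ (subsetIr G _)) // -(quotientSGK nQG sQC) defGQ.
have [c defc] := cyclicP cycGQ.
have /morphimP[x Nx Gx def_c] : c \in coset Q @* G by rewrite -quotientE defc cycle_id.
set w := x.`_q^'; have Gw : w \in G := groupX_constt _ Gx.
have [u defQ] := cyclicP cycQ; have Qu : u \in Q by rewrite defQ cycle_id.
have cuw : commute u w := commute_sym (centP (subsetP cQG w Gw) u Qu).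
have co_uw : coprime #[u] #[w].
  exact: pnat_coprime (mem_p_elt qQ Qu) (p_elt_constt _ _).
have ow : #[w] = #|G / Q|.
  by rewrite -order_coset_p'elt ?p_elt_constt // -coset_constt' // -def_c defc.
have ouw : #[(u * w)%g] = #|G|.
  by rewrite orderM // ow card_quotient // [#[u]]orderE -defQ Lagrange.
apply/cyclicP; exists (u * w)%g; apply/eqP.
by rewrite eq_sym eqEcard [X in _ <= X]ouw leqnn cycle_subG groupM // (subsetP sQG).
Qed.

End NormalCyclicSylow.

Section LargeElements.
Variable gT : finGroupType.

(* The Sylow q-subgroup of <[x]> is Sylow in G, and <[x]> normalizes it, so the
   number of Sylow q-subgroups divides #|G : <[x]>| < q; it is 1 mod q, hence 1. *)
Lemma large_elt_normal_cyclic_Sylow (G : {group gT}) q x :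
    prime q -> x \in G -> #|G| < q * #[x] ->
  exists Q : {group gT}, [/\ q.-Sylow(G) Q, Q <| G & cyclic Q].
Proof.
move=> q_pr Gx; have sXG : <[x]> \subset G by rewrite cycle_subG.
rewrite -(Lagrange sXG) -orderE mulnC ltn_pmul2r ?order_gt0 // => lt_iq.
have i_gt0 := indexg_gt0 G <[x]>.
have q'i : q^'.-nat #|G : <[x]>|.
  by rewrite p'natE // (contra (dvdn_leq i_gt0)) // -ltnNge.
have [P sylP] := Sylow_exists q <[x]>.
have sPX : P \subset <[x]> := pHall_sub sylP.
have sylPG : q.-Sylow(G) P.
  rewrite pHallE (subset_trans sPX sXG) /= (card_Hall sylP) -(Lagrange sXG).
  by rewrite partnM ?cardG_gt0 // (part_p'nat q'i) muln1.
have sXN : <[x]> \subset 'N_G(P).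
  by rewrite subsetI sXG (sub_abelian_norm (cycle_abelian x) sPX).
have nP_lt_q : #|G : 'N_G(P)| < q.
  exact: leq_ltn_trans (dvdn_leq i_gt0 (indexgS G sXN)) lt_iq.
have := card_Syl_mod G q_pr; rewrite (card_Syl sylPG) modn_small // => nP1.
exists P; split=> //; last exact: cyclicS sPX (cycle_cyclic x).
by rewrite /normal (pHall_sub sylPG) -{1}(index1g (subsetIl G 'N(P)) nP1) subsetIr.
Qed.

Lemma psi_le_order_bound (G : {group gT}) c :
  {in G, forall x, c * #[x] <= #|G|} -> c * psi G <= #|G| * #|G|.
Proof.
move=> le_cx; rewrite /psi big_distrr /= -sum_nat_const.
exact: leq_sum.
Qed.

Lemma psi_le_order_bound_outside (G H : {group gT}) c : H \subset G ->
    {in G :\: H, forall x, c * #[x] <= #|G|} ->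
  c * psi G <= c * psi H + (#|G| - #|H|) * #|G|.
Proof.
move=> sHG le_cx; rewrite /psi (big_setID H) /= (setIidPr sHG) mulnDr leq_add2l.
rewrite -(setIidPr sHG) -cardsD (setIidPr sHG) big_distrr /= -sum_nat_const.
exact: leq_sum.
Qed.

End LargeElements.

Section MainBound.
Variable gT : finGroupType.
Implicit Types G Q : {group gT}.

Lemma noncyclic_card_gt1 G : ~~ cyclic G -> 1 < #|G|.
Proof.
apply: contraNT; rewrite -leqNgt => le_G1.
apply: (@dvdn_prime_cyclic _ _ 2) => //.
by have := cardG_gt0 G; case: #|G| le_G1 => [|[]].
Qed.

Lemma card_quotient_Sylow G Q q : q.-Sylow(G) Q -> Q <| G -> #|G / Q| = #|G|`_q^'.
Proof.
move=> sylQ nsQG; rewrite card_quotient ?normal_norm // -divgS ?normal_sub //.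
by rewrite (card_Hall sylQ) -{1}(partnC q (cardG_gt0 G)) mulKn ?part_gt0.
Qed.

Lemma psiC_card_quotient_Sylow G Q q : q.-Sylow(G) Q -> Q <| G ->
  psiC #|G| = psiC #|Q| * psiC #|G / Q|.
Proof.
move=> sylQ nsQG; rewrite (card_quotient_Sylow sylQ nsQG) (card_Hall sylQ).
exact/psiC_partnC/cardG_gt0.
Qed.

Lemma psi_le_cyclic_quotient G Q : (max_pdiv #|G|).-Sylow(G) Q -> Q <| G ->
  cyclic Q -> cyclic (G / Q) -> ~~ cyclic G -> 11 * psi G <= 7 * psiC #|G|.
Proof.
move=> sylQ nsQG cycQ cycGQ ncycG; have G_gt1 := noncyclic_card_gt1 ncycG.
set q := max_pdiv #|G| in sylQ; have q_pr : prime q := max_pdiv_prime G_gt1.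
set K := ('C_G(Q) / Q)%G; have sKGQ : K \subset G / Q by rewrite quotientS ?subsetIl.
have ltKGQ : #|K| < #|G / Q|.
  rewrite proper_card // properEneq sKGQ andbT.
  by apply: contraNneq ncycG => /(cyclic_quotient_centralizer sylQ nsQG cycQ cycGQ).
have q_gt2 : 2 < q.
  have GQ_gt1 : 1 < #|G|`_q^'.
    by rewrite -(card_quotient_Sylow sylQ nsQG); apply: leq_ltn_trans ltKGQ.
  exact: leq_ltn_trans (prime_gt1 (max_pdiv_prime GQ_gt1)) (max_pdiv_partC G_gt1).
have [k oQ] : exists k, #|Q| = q ^ k.+1.
  rewrite (card_Hall sylQ) p_part; have : 0 < logn q #|G| by rewrite logn_gt0 pi_max_pdiv.
  by case: (logn q #|G|) => // k; exists k.
set T := \sum_(c in G / Q :\: K) #[c].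
have psiC_GQ : psiC #|G / Q| = psiC #|K| + T.
  rewrite -(cyclic_psiE cycGQ) -(cyclic_psiE (cyclicS sKGQ cycGQ)).
  by rewrite /psi (big_setID K) /= (setIidPr sKGQ).
have psiG := psi_le_centralizer q_pr sylQ nsQG cycQ oQ.
rewrite (cyclic_psiE (cyclicS sKGQ cycGQ)) -/K -/T in psiG.
have psiC_Q := psiC_expS_ge_odd k q_pr q_gt2; rewrite -oQ in psiC_Q.
have psiC_K := psiC_dvdn_proper (cardG_gt0 _) (cardSg sKGQ) ltKGQ.
rewrite (psiC_card_quotient_Sylow sylQ nsQG) psiC_GQ.
rewrite psiC_GQ in psiC_K; move: psiG psiC_Q psiC_K.
set gQ := psiC #|Q|; set gK := psiC #|K|; set r := q * psiC (q ^ k).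
move=> psiG psiC_Q psiC_K.
have : 7 * (r * T) <= 3 * (gQ * T) by rewrite !mulnA leq_mul2r psiC_Q orbT.
have : 2 * (gQ * gK) <= gQ * T by rewrite mulnCA leq_mul2l; apply/orP; right; lia.
lia.
Qed.

Section SmallOrders.
Variable G : {group gT}.
Hypothesis ncycG : ~~ cyclic G.
Let q := max_pdiv #|G|.
Hypothesis small_orders : {in G, forall x, q * #[x] <= #|G|}.

Let G_gt1 : 1 < #|G| := noncyclic_card_gt1 ncycG.
Let q_pr : prime q := max_pdiv_prime G_gt1.
Let psiC_G : 2 * (#|G| * #|G|) <= q.+1 * psiC #|G| := psiC_ge_sqr (cardG_gt0 G).

Let psi_le_outside_cycle x : x \in G ->
  q * psi G <= q * psiC #[x] + (#|G| - #[x]) * #|G|.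
Proof.
move=> Gx; rewrite -psi_cycle; apply: psi_le_order_bound_outside.
  by rewrite cycle_subG.
by move=> y /setDP[Gy _]; apply: small_orders.
Qed.

Lemma psi_le_orders_lt : {in G, forall x, q.+1 * #[x] <= #|G|} ->
  11 * psi G <= 7 * psiC #|G|.
Proof.
move/psi_le_order_bound => psiG.
have : q.+1 * (2 * psi G) <= q.+1 * psiC #|G|.
  by apply: leq_trans psiC_G; rewrite mulnCA leq_mul2l psiG orbT.
by rewrite leq_pmul2l //; lia.
Qed.

Lemma psi_le_q_ge5 : 5 <= q -> 11 * psi G <= 7 * psiC #|G|.
Proof.
move=> q_ge5; have psiG := psi_le_order_bound small_orders.
have : q * (22 * psi G) <= q * (14 * psiC #|G|) by nia.
by rewrite leq_pmul2l ?prime_gt0 //; lia.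
Qed.

Lemma psi_le_q2 x : q = 2 -> x \in G -> 2 * #[x] = #|G| -> 11 * psi G <= 7 * psiC #|G|.
Proof.
move=> q2 Gx ox; have psiG := psi_le_outside_cycle Gx; rewrite q2 in psiG.
have pn : 2.-nat #|G|.
  apply/pnatP=> // r r_pr r_G; rewrite !inE eqn_leq prime_gt1 // andbT -q2.
  by rewrite max_pdiv_max // mem_primes r_pr cardG_gt0.
have [b oG] : exists b, #|G| = 2 ^ b.+1.
  have := part_pnat_id pn; rewrite p_part.
  case: (logn 2 #|G|) => [|b] oG; last by exists b.
  by move: G_gt1; rewrite -oG.
have ox_b : #[x] = 2 ^ b.
  by apply/eqP; rewrite -(eqn_pmul2l (isT : 0 < 2)) ox oG expnS.
have ox_gt1 : 1 < #[x].
  rewrite ltnNge; apply: contra ncycG => ox_le1; apply: prime_cyclic.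
  by rewrite -ox; case: #[x] ox_le1 (order_gt0 x) => [|[]].
have := psiC_exp b (isT : prime 2); have := psiC_exp b.+1 (isT : prime 2).
rewrite -oG -ox_b -ox; move: psiG; rewrite -ox.
set K := #[x]; have : 4 <= K * K by nia.
lia.
Qed.

Lemma psi_le_q3 x : q = 3 -> x \in G -> 3 * #[x] = #|G| -> 11 * psi G <= 7 * psiC #|G|.
Proof.
move=> q3 Gx ox; have psiG := psi_le_outside_cycle Gx; have psiC_G3 := psiC_G.
rewrite q3 in psiG psiC_G3.
have psiC_x : 7 * psiC #[x] <= psiC #|G|.
  have := psiC_divn_prime (isT : prime 3) (cardG_gt0 G).
  by rewrite -ox mulKn //; apply; rewrite dvdn_mulr.
move: psiG psiC_G3 psiC_x; rewrite -ox; set K := #[x].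
have -> : 3 * K - K = 2 * K by lia.
by rewrite [2 * K * _]mulnACA [3 * K * _]mulnACA; lia.
Qed.

Lemma psi_le_small_orders : 11 * psi G <= 7 * psiC #|G|.
Proof.
have [lt_all | ] := boolP [forall (x | x \in G), q.+1 * #[x] <= #|G|].
  by apply: psi_le_orders_lt => x; apply/forall_inP: lt_all x.
rewrite negb_forall_in => /existsP[x /andP[Gx]]; rewrite -ltnNge => lt_x.
have ox : q * #[x] = #|G|.
  have [j oG] := dvdnP (order_dvdG Gx); have := small_orders Gx.
  move: lt_x; rewrite oG ltn_pmul2r ?leq_pmul2r ?order_gt0 // ltnS => le_jq le_qj.
  by rewrite (@anti_leq j q) ?le_jq.
have [q_ge5 | q_lt5] := leqP 5 q; first exact: psi_le_q_ge5.
have [q2 | q_ne2] := eqVneq q 2; first by apply: (psi_le_q2 q2 Gx); rewrite -q2.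
have q_ne4 : q != 4 by apply: contraTneq q_pr => ->.
have q3 : q = 3 by have := prime_gt1 q_pr; lia.
by apply: (psi_le_q3 q3 Gx); rewrite -q3.
Qed.

End SmallOrders.
End MainBound.

Lemma psi_le_noncyclic n (gT : finGroupType) (G : {group gT}) :
  #|G| <= n -> ~~ cyclic G -> 11 * psi G <= 7 * psiC #|G|.
Proof.
elim: n gT G => [|n IHn] gT G le_Gn ncycG; first by rewrite leqNgt cardG_gt0 in le_Gn.
have G_gt1 := noncyclic_card_gt1 ncycG; set q := max_pdiv #|G|.
have [/existsP[Q /and3P[sylQ nsQG cycQ]] | no_Q] :=
  boolP [exists Q : {group gT}, [&& q.-Sylow(G) Q, Q <| G & cyclic Q]].
  have [cycGQ | ncycGQ] := boolP (cyclic (G / Q)).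
    exact: (psi_le_cyclic_quotient sylQ nsQG cycQ cycGQ ncycG).
  have le_GQn : #|G / Q| <= n.
    rewrite -ltnS (leq_trans _ le_Gn) // (card_quotient_Sylow sylQ nsQG).
    rewrite -[X in _ < X](partnC q (cardG_gt0 G)) ltn_Pmull ?part_gt0 //.
    by rewrite p_part_gt1 pi_max_pdiv.
  rewrite (psiC_card_quotient_Sylow sylQ nsQG) mulnCA.
  apply: leq_trans (_ : 11 * (psiC #|Q| * psi (G / Q)) <= _).
    by rewrite leq_mul2l (psi_quotient_le sylQ nsQG cycQ) orbT.
  by rewrite mulnCA leq_mul2l (IHn _ _ le_GQn ncycGQ) orbT.
apply: psi_le_small_orders => // x Gx; rewrite leqNgt; apply/negP => large_x.
have [Q [sylQ nsQG cycQ]] :=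
  large_elt_normal_cyclic_Sylow (max_pdiv_prime G_gt1) Gx large_x.
by case/existsP: no_Q; exists Q; rewrite sylQ nsQG.
Qed.

Theorem theorem1 (gT : finGroupType) (G : {group gT}) :
  ~~ cyclic G -> (11 * psi G <= 7 * psi_cyclic #|G|)%N.
Proof.
by move=> ncycG; rewrite psi_cyclicE ?cardG_gt0 // (psi_le_noncyclic (leqnn _)).
Qed.
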